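(* Let $\ast$ be any of the four standard graph products (Cartesian $\square$, direct $\times$, lexicographic $\circ$, strong $\boxtimes$). No minimum counterexample to the conjecture ''for every graph $G$, $\chi(G)\le \mathrm{toi}(G)$'' is of the form $G \ast H$.
   Context: All graphs are finite, simple and loopless. $\chi(G)$ is the chromatic number. A graph $G$ contains $H$ as a strong immersion if there is an injective map $\varphi\colon V(H)\to V(G)$ and, for each edge $uv\in E(H)$, a path in $G$ joining $\varphi(u),\varphi(v)$, such that these paths are pairwise edge-disjoint and no terminal is an interior vertex of any such path; it is totally odd if all paths have odd length. $\mathrm{toi}(G)$ is the maximum $t$ such that $G$ contains a totally odd strong immersion of $K_t$. Products: Cartesian $G\square H$ on $V(G)\times V(H)$ with $(g_1,h_1)\sim(g_2,h_2)$ iff ($g_1=g_2$, $h_1h_2\in E(H)$) or ($h_1=h_2$, $g_1g_2\in E(G)$); direct $G\times H$ with adjacency iff $g_1g_2\in E(G)$ and $h_1h_2\in E(H)$; strong $G\boxtimes H=(G\square H)\cup(G\times H)$; lexicographic $G\circ H$ with adjacency iff $g_1g_2\in E(G)$, or $g_1=g_2$ and $h_1h_2\in E(H)$. *)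

From Stdlib Require Import ClassicalEpsilon.
From mathcomp Require Import all_boot.
Set Implicit Arguments. Unset Strict Implicit. Unset Printing Implicit Defensive.

Record graph := Graph {
  vtx : finType;
  adj : rel vtx;
  adj_sym : symmetric adj;
  adj_irr : irreflexive adj }.
Arguments adj : clear implicits.
Arguments adj_sym : clear implicits.
Arguments adj_irr : clear implicits.

Definition colorable (G : graph) (k : nat) : bool :=
  [exists f : {ffun vtx G -> 'I_k},
     [forall u : vtx G, forall v : vtx G, adj G u v ==> (f u != f v)]].

Lemma colorable_card (G : graph) : exists k, colorable G k.
Proof.
exists #|vtx G|; apply/existsP; exists [ffun v => enum_rank v].
apply/forallP => u; apply/forallP => v; apply/implyP => huv.
rewrite !ffunE; apply/eqP => /enum_rank_inj euv.
by move: huv; rewrite euv adj_irr.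
Qed.

Definition chi (G : graph) : nat := ex_minn (colorable_card G).

Definition pb (P : Prop) : bool :=
  if excluded_middle_informative P then true else false.

Definition uses (T : eqType) (p : seq T) (a b : T) : bool :=
  ((a, b) \in zip p (behead p)) || ((b, a) \in zip p (behead p)).

(* G contains a totally odd strong immersion of K_t: terminals phi (injective);
   for each edge ij (i < j) of K_t a path phi i :: P i j from phi i to phi j
   (distinct vertices, consecutive ones adjacent), of odd length (= size (P i j)),
   whose only terminals are its ends; the paths are pairwise edge-disjoint. *)
Definition toi_immersion (G : graph) (t : nat) : Prop :=
  exists (phi : 'I_t -> vtx G) (P : 'I_t -> 'I_t -> seq (vtx G)),
    [/\ injective phi,
        (forall i j : 'I_t, i < j ->
           [/\ path (adj G) (phi i) (P i j),
               last (phi i) (P i j) = phi j,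
               uniq (phi i :: P i j),
               odd (size (P i j)) &
               forall k : 'I_t, phi k \in phi i :: P i j -> (k == i) || (k == j)]) &
        (forall i j k l : 'I_t, i < j -> k < l -> (i, j) != (k, l) ->
           forall a b : vtx G,
             ~~ (uses (phi i :: P i j) a b && uses (phi k :: P k l) a b))].

(* toi(G) = max t with such an immersion; t <= |V(G)| by injectivity of phi. *)
Definition toi (G : graph) : nat :=
  \max_(t < #|vtx G|.+1 | pb (toi_immersion G t)) t.

Definition counterexample (G : graph) : Prop := toi G < chi G.

Definition min_counterexample (G : graph) : Prop :=
  counterexample G /\
  forall G' : graph, #|vtx G'| < #|vtx G| -> chi G' <= toi G'.

Inductive gproduct := Cartesian | Direct | Lexicographic | Strong.

Section Products.
Variables (G H : graph).
Implicit Types (x y : (vtx G * vtx H)%type).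

Definition cart_adj x y :=
  ((x.1 == y.1) && adj H x.2 y.2) || ((x.2 == y.2) && adj G x.1 y.1).
Definition direct_adj x y := adj G x.1 y.1 && adj H x.2 y.2.
Definition strong_adj x y := cart_adj x y || direct_adj x y.
Definition lex_adj x y := adj G x.1 y.1 || ((x.1 == y.1) && adj H x.2 y.2).

Definition prod_adj (p : gproduct) : rel (vtx G * vtx H)%type :=
  match p with
  | Cartesian => cart_adj
  | Direct => direct_adj
  | Lexicographic => lex_adj
  | Strong => strong_adj
  end.

Lemma prod_adj_sym p : symmetric (prod_adj p).
Proof.
move=> x y; case: p => /=;
rewrite /strong_adj /cart_adj /direct_adj /lex_adj
  ?(eq_sym x.1) ?(eq_sym x.2) ?(adj_sym G x.1) ?(adj_sym H x.2) //.
Qed.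

Lemma prod_adj_irr p : irreflexive (prod_adj p).
Proof.
move=> x; case: p => /=;
by rewrite /strong_adj /cart_adj /direct_adj /lex_adj !adj_irr ?andbF.
Qed.

Definition gprod (p : gproduct) : graph :=
  @Graph (vtx G * vtx H)%type (prod_adj p) (@prod_adj_sym p) (@prod_adj_irr p).
End Products.

(* For each of the four products, chi(G * H) <= f(chi G, chi H) and
   f(toi G, toi H) <= toi(G * H), where f is max (Cartesian), min (direct) or
   the product (strong, lexicographic). As G and H have fewer vertices than
   G * H, minimality gives chi <= toi on both factors, and f is monotone.

   G and H embed in the Cartesian product.
   In the direct product the terminals are pairs (g_i, h_i), and the two odd
   paths of the factors are run side by side, the shorter one padded by
   bouncing on its first edge. In the strong product (a subgraph of the
   lexicographic one) the terminals are all pairs (g_i, h_j); two of them are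
   joined inside a copy of G or H when they share a coordinate, and diagonally
   as in the direct product otherwise. Along an odd path the parity of the
   position flips at every step, so at each vertex of the diagonal walk from
   (g_i, h_j) to (g_i', h_j') both coordinates sit at positions of the same
   parity on their paths; on the crossed walk from (g_i, h_j') to (g_i', h_j)
   the parities differ, hence these two walks are even vertex-disjoint.
   All other pairs of walks are edge-disjoint coordinatewise. *)

From Stdlib Require Import ClassicalEpsilon.
From mathcomp Require Import all_boot zify.
Set Implicit Arguments. Unset Strict Implicit. Unset Printing Implicit Defensive.

(** * Odd walks *)

Section Walks.
Variable T : eqType.
Implicit Types (e : rel T) (p s : seq T) (a b v x y : T).

(* Walks are given by their full vertex sequence, so [s] has [(size s).-1] edges. *)
Definition odd_walk e x y s :=
  [&& head y s == x, sorted e s, last x s == y & odd (size s).-1].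

Definition odd_path e x y s := odd_walk e x y s && uniq s.

Lemma odd_walkE e x y s :
  odd_walk e x y s <-> exists2 p, s = x :: p & [&& path e x p, last x p == y & odd (size p)].
Proof.
split; last by case=> p -> wp; rewrite /odd_walk /= eqxx.
by case: s => [|z p] /and4P[/eqP /= zx ep lp op] //; exists p; rewrite -?zx ?ep ?lp.
Qed.

Lemma odd_path_cons e x y p :
  odd_path e x y (x :: p) = [&& path e x p, last x p == y, odd (size p) & uniq (x :: p)].
Proof. by rewrite /odd_path /odd_walk /= eqxx -!andbA. Qed.

Lemma odd_walk_sub e e' x y s : subrel e e' -> odd_walk e x y s -> odd_walk e' x y s.
Proof. by move=> ee' /and4P[hs /(sub_sorted ee') es ls os]; apply/and4P. Qed.

Lemma odd_path_sub e e' x y s : subrel e e' -> odd_path e x y s -> odd_path e' x y s.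
Proof. by move=> ee' /andP[/(odd_walk_sub ee') ws us]; apply/andP. Qed.

Lemma odd_path_rev e x y s : symmetric e -> odd_path e x y s -> odd_path e y x (rev s).
Proof.
move=> e_sym /andP[/odd_walkE[p -> /and3P[ep /eqP <- op]] us].
rewrite /odd_path rev_uniq us andbT /odd_walk lastI rev_rcons /= eqxx rev_path.
rewrite size_rev size_belast op andbT (@eq_path _ _ e) => [|? ?]; last exact: e_sym.
rewrite ep /=; case: p {ep op us} => [|z p] /=; first by rewrite eqxx.
by rewrite rev_cons last_rcons eqxx.
Qed.

Lemma mem_zip_behead a b s : ((a, b) \in zip s (behead s)) = infix [:: a; b] s.
Proof.
elim: s => [|x [|y s] IH] //=; first by rewrite andbF.
by rewrite in_cons IH /= xpair_eqE prefix0s andbT.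
Qed.

Lemma usesE s a b : uses s a b = infix [:: a; b] s || infix [:: b; a] s.
Proof. by rewrite /uses !mem_zip_behead. Qed.

Lemma uses_sym s a b : uses s a b = uses s b a.
Proof. by rewrite !usesE orbC. Qed.

Lemma uses_rev s a b : uses (rev s) a b = uses s a b.
Proof.
have infix2_rev c d : infix [:: c; d] (rev s) = infix [:: d; c] s.
  by rewrite -infix_rev revK.
by rewrite !usesE !infix2_rev orbC.
Qed.

Lemma uses_mem s a b : uses s a b -> a \in s /\ b \in s.
Proof.
by rewrite usesE => /orP[] /mem_infix sub; split; apply: sub; rewrite !inE eqxx ?orbT.
Qed.

Lemma uses_cons x s a b : uses s a b -> uses (x :: s) a b.
Proof. by rewrite !usesE => /orP[] /(infix_catl [:: x]) ->; rewrite ?orbT. Qed.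

Lemma uses_sorted e s a b : symmetric e -> sorted e s -> uses s a b -> e a b.
Proof.
move=> e_sym es; rewrite usesE => /orP[] /infix_sorted/(_ es) /= /andP[] //.
by rewrite e_sym.
Qed.

Lemma sorted_uses s : sorted (uses s) s.
Proof.
elim: s => [|x [|y s] IH] //=; rewrite {1}/uses inE eqxx /=.
by apply: sub_path IH => a b; apply: uses_cons.
Qed.

Lemma odd_walk_uses e x y s : odd_walk e x y s -> odd_walk (uses s) x y s.
Proof. by case/and4P=> hs _ ls os; apply/and4P; rewrite sorted_uses. Qed.

Lemma path_invariant (U : Type) (r : rel T) (f : T -> U) x p :
  (forall a b, r a b -> f a = f b) -> path r x p -> {in x :: p, forall v, f v = f x}.
Proof.
move=> rf; elim: p x => [|y p IH] x /=; first by move=> _ v; rewrite inE => /eqP->.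
case/andP=> /rf fxy /IH{}IH v; rewrite inE => /predU1P[-> // | vp].
by rewrite IH ?inE ?vp ?orbT.
Qed.

Definition side s v := odd (index v s).

Lemma uses_side s a b : uniq s -> uses s a b -> side s b = ~~ side s a.
Proof.
have side2 (c d : T) s1 s2 (s' := s1 ++ [:: c, d & s2]) : uniq s' -> side s' d = ~~ side s' c.
  rewrite /s' cat_uniq /side => /and3P[_ /hasPn notin_s1 /andP[]].
  rewrite inE negb_or => /andP[cd _] _.
  have [cs1 ds1] : c \notin s1 /\ d \notin s1.
    by split; apply: notin_s1; rewrite !inE eqxx ?orbT.
  by rewrite !index_cat (negbTE cs1) (negbTE ds1) /= !eqxx (negbTE cd) addn0 addn1.
move=> us; rewrite usesE => /orP[] /infixP[s1 [s2 sE]]; rewrite sE in us *.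
  exact: side2.
by rewrite side2 // negbK.
Qed.

Lemma side_ends e x y s : odd_path e x y s -> side s x = false /\ side s y = true.
Proof.
case/andP=> /odd_walkE[p -> /and3P[_ /eqP <- op]] us.
by rewrite /side index_head index_last.
Qed.

Lemma side_rev e x y s v : odd_path e x y s -> v \in s -> side (rev s) v = ~~ side s v.
Proof.
case/andP=> /odd_walkE[p sE /and3P[_ _ op]] us vs; rewrite /side; set k := index v s.
have k_lt : k < size s by rewrite index_mem.
have vE : nth v (rev s) (size s - k.+1) = v.
  by rewrite nth_rev; [rewrite (_ : _ - _ = k) ?nth_index //|]; lia.
rewrite -[in index v _]vE index_uniq ?size_rev ?rev_uniq //; last by lia.
by rewrite oddB // sE /= op.
Qed.

Definition pad m s := if s is x :: y :: _ then iter m (fun r => x :: y :: r) s else s.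

Definition padto n s := pad (n - size s)./2 s.

Lemma mem_pad m s : pad m s =i s.
Proof.
case: s => [|x [|y s]] //= v; elim: m => //= m IH.
by rewrite in_cons [in X in _ || X]in_cons IH !inE; case: (v == x); case: (v == y).
Qed.

Lemma padto_size s : padto (size s) s = s.
Proof. by rewrite /padto subnn; case: s => [|x [|y s]]. Qed.

Lemma odd_walk_bounce e x y z s :
  symmetric e -> e x z -> odd_walk e x y s -> odd_walk e x y [:: x, z & s].
Proof.
move=> e_sym exz /odd_walkE[p -> /and3P[ep lp op]]; apply/odd_walkE.
by exists [:: z, x & p] => //=; rewrite exz e_sym exz ep lp /= op.
Qed.

Lemma odd_walk_pad e x y m s : symmetric e -> odd_walk e x y s -> odd_walk e x y (pad m s).
Proof.
move=> e_sym w; case/odd_walkE: (w) => [[|z p] sE /and3P[ep _ op]] //; rewrite sE in w *.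
elim: m => //= m IH; apply: odd_walk_bounce IH => //; by case/andP: ep.
Qed.

Lemma size_padto e x y n s :
  odd_walk e x y s -> size s <= n -> ~~ odd n -> size (padto n s) = n.
Proof.
case/odd_walkE=> [[|z p] -> /and3P[_ _ op]] // le_n even_n; rewrite /padto.
have size_pad m : size (pad m [:: x, z & p]) = m.*2 + (size p).+2.
  by elim: m => //= m ->; rewrite doubleS.
by move: le_n even_n op; rewrite size_pad /=; lia.
Qed.

End Walks.

Section Zips.
Variables T U : eqType.
Implicit Types (s : seq T) (t : seq U).

Lemma sorted_zip (e1 : rel T) (e2 : rel U) s t :
  sorted e1 s -> sorted e2 t -> sorted [rel a b | e1 a.1 b.1 && e2 a.2 b.2] (zip s t).
Proof.
elim: s t => [|x s IH] [|y t] //=; case: s t IH => [|x' s] [|y' t] //= IH.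
by case/andP=> e1x ps /andP[e2y pt]; rewrite e1x e2y; exact: (IH (y' :: t)).
Qed.

Lemma last_zip x x' s t : size s = size t -> last (x, x') (zip s t) = (last x s, last x' t).
Proof. by elim: s x x' t => [|z s IH] x x' [|z' t] //= [/IH]. Qed.

Lemma mem_zip v s t : v \in zip s t -> (v.1 \in s) && (v.2 \in t).
Proof.
elim: s t => [|x s IH] [|y t] //=; rewrite inE => /predU1P[-> | /IH/andP[vs vt]].
  by rewrite !inE !eqxx.
by rewrite !inE vs vt !orbT.
Qed.

Lemma odd_walk_zip (e1 : rel T) (e2 : rel U) x y x' y' s t :
  size s = size t -> odd_walk e1 x y s -> odd_walk e2 x' y' t ->
  odd_walk [rel a b | e1 a.1 b.1 && e2 a.2 b.2] (x, x') (y, y') (zip s t).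
Proof.
move=> st /odd_walkE[p sE /and3P[ep /eqP lp op]] /odd_walkE[q tE /and3P[eq /eqP lq oq]].
move: st; rewrite sE tE /= => -[pq]; apply/odd_walkE; exists (zip p q) => //.
have := @sorted_zip e1 e2 (x :: p) (x' :: q) ep eq; rewrite /= => -> /=.
by rewrite last_zip // lp lq eqxx size_zip pq minnn -pq.
Qed.

Lemma zip_behead_map (f : T -> U) s :
  zip (map f s) (behead (map f s)) = [seq (f p.1, f p.2) | p <- zip s (behead s)].
Proof. by rewrite behead_map; elim: s (behead s) => [|x s IH] [|y t] //=; rewrite IH. Qed.

Lemma uses_map_inj (f : T -> U) s a b : injective f -> uses (map f s) (f a) (f b) = uses s a b.
Proof.
move=> f_inj; have fp_inj : injective (fun p : T * T => (f p.1, f p.2)).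
  by move=> [? ?] [? ?] [/f_inj-> /f_inj->].
rewrite /uses zip_behead_map.
by move: (mem_map fp_inj (zip s (behead s))) => memE; rewrite (memE (a, b)) (memE (b, a)).
Qed.

Lemma uses_map_inv (f : T -> U) s a b : injective f -> uses (map f s) a b ->
  exists a' b', [/\ a = f a', b = f b' & uses s a' b'].
Proof.
move=> f_inj u; have [/mapP[a' _ aE] /mapP[b' _ bE]] := uses_mem u; subst a b.
by exists a', b'; rewrite uses_map_inj in u.
Qed.

Lemma odd_path_map (e : rel T) (e' : rel U) (f : T -> U) x y s :
  injective f -> {homo f : a b / e a b >-> e' a b} ->
  odd_path e x y s -> odd_path e' (f x) (f y) (map f s).
Proof.
move=> f_inj f_homo /andP[/odd_walkE[p -> /and3P[ep /eqP <- op]] us].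
rewrite /odd_path map_inj_uniq // us andbT; apply/odd_walkE; exists (map f p) => //.
by rewrite (homo_path f_homo) // last_map size_map op eqxx.
Qed.

Definition diag s t :=
  zip (padto (maxn (size s) (size t)) s) (padto (maxn (size s) (size t)) t).

Lemma mem_diag v s t : v \in diag s t -> (v.1 \in s) && (v.2 \in t).
Proof. by move/mem_zip; rewrite !mem_pad. Qed.

Lemma diag_walk (e1 : rel T) (e2 : rel U) x y x' y' s t :
  odd_walk e1 x y s -> odd_walk e2 x' y' t ->
  odd_walk [rel a b | uses s a.1 b.1 && uses t a.2 b.2] (x, x') (y, y') (diag s t).
Proof.
move=> ws wt; set n := maxn (size s) (size t).
have even_n : ~~ odd n.
  by move: ws wt => /and4P[_ _ _ os] /and4P[_ _ _ ot]; rewrite /n; lia.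
apply: odd_walk_zip; rewrite ?(size_padto ws) ?(size_padto wt) ?leq_maxl ?leq_maxr //.
  exact/odd_walk_pad/odd_walk_uses/ws/uses_sym.
exact/odd_walk_pad/odd_walk_uses/wt/uses_sym.
Qed.

Lemma uses_diag (e1 : rel T) (e2 : rel U) x y x' y' s t a b :
  odd_walk e1 x y s -> odd_walk e2 x' y' t -> uses (diag s t) a b ->
  uses s a.1 b.1 && uses t a.2 b.2.
Proof.
move=> ws wt; case/and4P: (diag_walk ws wt) => _ sd _ _; apply: uses_sorted sd.
by move=> c d /=; rewrite uses_sym [uses t _ _]uses_sym.
Qed.

Lemma diag_odd_path (e1 : rel T) (e2 : rel U) x y x' y' s t :
  symmetric e1 -> symmetric e2 -> odd_path e1 x y s -> odd_path e2 x' y' t ->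
  odd_path [rel a b | e1 a.1 b.1 && e2 a.2 b.2] (x, x') (y, y') (diag s t).
Proof.
move=> e1_sym e2_sym /andP[ws us] /andP[wt ut]; apply/andP; split.
  apply: odd_walk_sub (diag_walk ws wt) => a b /andP[ab1 ab2] /=.
  case/and4P: ws wt => _ es _ _ /and4P[_ et _ _].
  by rewrite (uses_sorted e1_sym es ab1) (uses_sorted e2_sym et ab2).
rewrite /diag; case: (leqP (size t) (size s)) => _; rewrite padto_size.
  exact: zip_uniql.
exact: zip_uniqr.
Qed.

Lemma side_diag (e1 : rel T) (e2 : rel U) x y x' y' s t v :
  odd_path e1 x y s -> odd_path e2 x' y' t -> v \in diag s t -> side s v.1 = side t v.2.
Proof.
move=> ps pt; have [[sx _] [tx _]] := (side_ends ps, side_ends pt).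
case/andP: ps pt => ws us /andP[wt ut].
have /odd_walkE[p -> /and3P[dp _ _]] := diag_walk ws wt.
have step a b : uses s a.1 b.1 && uses t a.2 b.2 ->
    side s a.1 (+) side t a.2 = side s b.1 (+) side t b.2.
  by case/andP=> /(uses_side us) -> /(uses_side ut) ->; rewrite addbN addNb negbK.
move/(path_invariant step dp); rewrite /= sx tx.
by case: (side s v.1); case: (side t v.2).
Qed.

End Zips.

(** * Totally odd immersions indexed by a finite type *)

(* Unlike [toi_immersion], there is a walk [W i j] (with both ends) for every
   ordered pair of distinct terminals; only distinct unordered pairs must be
   edge-disjoint. *)
Definition odd_immersion (I : finType) (G : graph) (phi : I -> vtx G)
    (W : I -> I -> seq (vtx G)) : Prop :=
  [/\ injective phi,
      forall i j, i != j -> odd_path (adj G) (phi i) (phi j) (W i j),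
      forall i j k, i != j -> phi k \in W i j -> (k == i) || (k == j) &
      forall i j k l a b, i != j -> k != l -> uses (W i j) a b -> uses (W k l) a b ->
        (k, l) = (i, j) \/ (k, l) = (j, i)].

Section OddImmersion.
Variables (I : finType) (G : graph) (phi : I -> vtx G) (W : I -> I -> seq (vtx G)).
Hypothesis immW : odd_immersion phi W.

Lemma odd_immersion_path i j : i != j -> odd_path (adj G) (phi i) (phi j) (W i j).
Proof. by case: immW => _ paths _ _; apply: paths. Qed.

Lemma odd_immersion_adj i j a b : i != j -> uses (W i j) a b -> adj G a b.
Proof.
move/odd_immersion_path => /andP[/and4P[_ sW _ _] _].
by apply: uses_sorted sW; apply: adj_sym.
Qed.

Lemma odd_immersion_relabel (I' : finType) (g : I' -> I) :
  injective g -> odd_immersion (phi \o g) (fun i j => W (g i) (g j)).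
Proof.
case: immW => phi_inj paths ends disj g_inj; split => [||i j k|i j k l a b].
- exact: inj_comp.
- by move=> i j ij; apply: paths; rewrite (inj_eq g_inj).
- by move=> ij; rewrite -(inj_eq g_inj) in ij => /(ends _ _ _ ij); rewrite !(inj_eq g_inj).
move=> ij kl u1 u2; have [] := disj _ _ _ _ _ _ _ _ u1 u2; rewrite ?(inj_eq g_inj) //.
  by case=> /g_inj-> /g_inj->; left.
by case=> /g_inj-> /g_inj->; right.
Qed.

Lemma odd_immersion_hom (B : graph) (f : vtx G -> vtx B) :
  injective f -> {homo f : a b / adj G a b >-> adj B a b} ->
  odd_immersion (f \o phi) (fun i j => map f (W i j)).
Proof.
case: immW => phi_inj paths ends disj f_inj f_homo; split => [||i j k|i j k l a b].
- exact: inj_comp.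
- by move=> i j ij; apply: odd_path_map; last exact: paths.
- by move=> ij; rewrite /= mem_map //; apply: ends.
move=> ij kl /(uses_map_inv f_inj)[a' [b' [-> -> u1]]].
by rewrite uses_map_inj // => u2; apply: disj u1 u2.
Qed.

End OddImmersion.

Lemma odd_immersion_direct (I : finType) (G H : graph) (phiG : I -> vtx G)
    (phiH : I -> vtx H) WG WH :
  odd_immersion phiG WG -> odd_immersion phiH WH ->
  odd_immersion (fun i => (phiG i, phiH i) : vtx (gprod G H Direct))
    (fun i j => diag (WG i j) (WH i j)).
Proof.
move=> [phiG_inj pathsG endsG disjG] [_ pathsH _ _].
split => [i j /(congr1 fst)/phiG_inj // | i j ij | i j k ij | i j k l a b ij kl].
- by apply: diag_odd_path (pathsG _ _ ij) (pathsH _ _ ij); apply: adj_sym.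
- by case/mem_diag/andP => /(endsG _ _ _ ij).
case/andP: (pathsG _ _ ij) (pathsH _ _ ij) => wG _ /andP[wH _].
case/andP: (pathsG _ _ kl) (pathsH _ _ kl) => wG' _ /andP[wH' _].
move=> /(uses_diag wG wH)/andP[u1 _] /(uses_diag wG' wH')/andP[u2 _].
exact: disjG u1 u2.
Qed.

(* The projection to one factor of an edge [a b] of a walk in a product. *)
Definition edge_proj (K : graph) (L : finType) (phi : L -> vtx K)
    (W : L -> L -> seq (vtx K)) (i i' : L) (a b : vtx K) : Prop :=
  (i = i' /\ a = phi i /\ b = phi i) \/ (i != i' /\ uses (W i i') a b).

Lemma edge_proj_pair (K : graph) (L : finType) (phi : L -> vtx K) W i i' k k' a b :
  odd_immersion phi W -> edge_proj phi W i i' a b -> edge_proj phi W k k' a b ->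
  (k, k') = (i, i') \/ (k, k') = (i', i).
Proof.
move=> immW [[<- [-> ->]] | [ii' u]] [[<- [ak bk]] | [kk' u']].
- by case: immW => phi_inj _ _ _; rewrite (phi_inj _ _ ak); left.
- by move: (odd_immersion_adj immW kk' u'); rewrite adj_irr.
- by move: (odd_immersion_adj immW ii' u); rewrite ak bk adj_irr.
- by case: immW => _ _ _ disj; apply: disj u u'.
Qed.

Section StrongProduct.
Variables (G H : graph) (I J : finType).
Variables (phiG : I -> vtx G) (WG : I -> I -> seq (vtx G)).
Variables (phiH : J -> vtx H) (WH : J -> J -> seq (vtx H)).
Hypotheses (immG : odd_immersion phiG WG) (immH : odd_immersion phiH WH).
Hypotheses (WG_rev : forall i i', WG i' i = rev (WG i i')).
Hypotheses (WH_rev : forall j j', WH j' j = rev (WH j j')).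

Let phi (x : I * J) : vtx (gprod G H Strong) := (phiG x.1, phiH x.2).

Definition strong_walk (x y : I * J) : seq (vtx G * vtx H) :=
  if x.1 == y.1 then map (pair (phiG x.1)) (WH x.2 y.2)
  else if x.2 == y.2 then map (pair^~ (phiH x.2)) (WG x.1 y.1)
  else diag (WG x.1 y.1) (WH x.2 y.2).

Lemma strong_walk_diag i j i' j' v : i != i' -> j != j' ->
  v \in strong_walk (i, j) (i', j') ->
  [/\ v.1 \in WG i i', v.2 \in WH j j' & side (WG i i') v.1 = side (WH j j') v.2].
Proof.
move=> ii' jj'; rewrite /strong_walk /= (negbTE ii') (negbTE jj') => vW.
case/andP: (mem_diag vW) => vG vH; split=> //.
exact: side_diag (odd_immersion_path immG ii') (odd_immersion_path immH jj') vW.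
Qed.

Lemma strong_walk_path x y : x != y ->
  odd_path (adj (gprod G H Strong)) (phi x) (phi y) (strong_walk x y).
Proof.
case: x y => [i j] [i' j']; rewrite xpair_eqE /phi /strong_walk /=.
case: eqP => [<- | /eqP ii'] /= => [jj' | ].
  apply: (odd_path_map (e := adj H)) (odd_immersion_path immH jj') => [? ? [] //|h h' hh'].
  by rewrite /= /strong_adj /cart_adj /= eqxx hh'.
case: eqP => [<- | /eqP jj'] _.
  apply: (odd_path_map (e := adj G)) (odd_immersion_path immG ii') => [? ? [] //|g g' gg'].
  by rewrite /= /strong_adj /cart_adj /= eqxx gg' orbT.
apply: odd_path_sub (diag_odd_path (adj_sym G) (adj_sym H)
  (odd_immersion_path immG ii') (odd_immersion_path immH jj')).
by move=> a b /= ab; rewrite /strong_adj /direct_adj ab orbT.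
Qed.

Lemma strong_walk_ends x y z : x != y -> phi z \in strong_walk x y -> (z == x) || (z == y).
Proof.
have [[phiG_inj _ endsG _] [phiH_inj _ endsH _]] := (immG, immH).
case: x y z => [i j] [i' j'] [k l]; rewrite xpair_eqE /phi /= => xy.
case: (eqVneq i i') => [<- | ii'] in xy *.
  rewrite /strong_walk /= eqxx => /mapP[h hW [/phiG_inj-> lE]].
  by rewrite -lE in hW; rewrite !xpair_eqE eqxx; apply: endsH hW.
case: (eqVneq j j') => [<- | jj'] in xy *.
  rewrite /strong_walk /= (negbTE ii') eqxx => /mapP[g gW [kE /phiH_inj->]].
  by rewrite -kE in gW; rewrite !xpair_eqE eqxx !andbT; apply: endsG gW.
case/strong_walk_diag => // /= /(endsG _ _ _ ii') kE /(endsH _ _ _ jj') lE.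
have [sGi sGi'] := side_ends (odd_immersion_path immG ii').
have [sHj sHj'] := side_ends (odd_immersion_path immH jj').
case/orP: kE => /eqP->; case/orP: lE => /eqP->;
  by rewrite ?sGi ?sGi' ?sHj ?sHj' // !xpair_eqE !eqxx ?orbT.
Qed.

Lemma strong_walk_edge x y a b : x != y -> uses (strong_walk x y) a b ->
  edge_proj phiG WG x.1 y.1 a.1 b.1 /\ edge_proj phiH WH x.2 y.2 a.2 b.2.
Proof.
case: x y => [i j] [i' j']; rewrite /strong_walk xpair_eqE /=.
case: eqP => [<- | /eqP ii'] /=; [|case: eqP => [<- | /eqP jj'] /=] => xy u.
- have [|a2 [b2 [-> -> {}u]]] := uses_map_inv _ u; first by move=> ? ? [].
  by split; [left | right].
- have [|a1 [b1 [-> -> {}u]]] := uses_map_inv _ u; first by move=> ? ? [].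
  by split; [right | left].
case/andP: (odd_immersion_path immG ii') (odd_immersion_path immH jj') => wG _ /andP[wH _].
by case/andP: (uses_diag wG wH u); split; right.
Qed.

Lemma strong_walk_disjoint x y x' y' a b : x != y -> x' != y' ->
  uses (strong_walk x y) a b -> uses (strong_walk x' y') a b ->
  (x', y') = (x, y) \/ (x', y') = (y, x).
Proof.
case: x y x' y' => [i j] [i' j'] [k l] [k' l'] xy kl u1 u2.
have [eG eH] := strong_walk_edge xy u1; have [eG' eH'] := strong_walk_edge kl u2.
case: (edge_proj_pair immG eG eG') (edge_proj_pair immH eH eH') => -[-> ->] [] [-> ->] in u2 *;
  [by left | | | by right]; have [[a1 _] [a2 _]] := (uses_mem u1, uses_mem u2).
(* Unless degenerate, the two walks now join crossed pairs of terminals: the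
   sides agree along the first and disagree along the second. *)
- case: (eqVneq i i') => [<- | ii']; first by right.
  case: (eqVneq j j') => [<- | jj']; first by left.
  have [_ aH sa] := strong_walk_diag ii' jj' a1.
  have j'j : j' != j by rewrite eq_sym.
  have [_ _] := strong_walk_diag ii' j'j a2.
  by rewrite WH_rev (side_rev (odd_immersion_path immH jj') aH) sa; case: (side _ _).
case: (eqVneq i i') => [<- | ii']; first by left.
case: (eqVneq j j') => [<- | jj']; first by right.
have [aG _ sa] := strong_walk_diag ii' jj' a1.
have i'i : i' != i by rewrite eq_sym.
have [_ _] := strong_walk_diag i'i jj' a2.
by rewrite WG_rev (side_rev (odd_immersion_path immG ii') aG) -sa; case: (side _ _).
Qed.

Lemma odd_immersion_strong : odd_immersion phi strong_walk.
Proof.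
split; [|exact: strong_walk_path | exact: strong_walk_ends | exact: strong_walk_disjoint].
have [[phiG_inj _ _ _] [phiH_inj _ _ _]] := (immG, immH).
by move=> [i j] [i' j'] [/phiG_inj-> /phiH_inj->].
Qed.

End StrongProduct.

(** * Bounds on [toi] *)

Lemma pbP (P : Prop) : reflect P (pb P).
Proof. by rewrite /pb; case: excluded_middle_informative => h; constructor. Qed.

Lemma odd_immersion_toi (I : finType) (G : graph) (phi : I -> vtx G) W :
  odd_immersion phi W -> #|I| <= toi G.
Proof.
move=> immW; have [phi_inj _ _ _] := immW.
pose ev : 'I_#|I| -> I := enum_val.
pose phi' := phi \o ev; pose W' i j := W (ev i) (ev j).
have [phi'_inj paths ends disj] : odd_immersion phi' W'.
  have ev_inj : injective ev by apply: enum_val_inj.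
  exact (odd_immersion_relabel immW ev_inj).
have neq_lt (i j : 'I_#|I|) : i < j -> i != j by move/ltn_eqF/negbT.
have WE (i j : 'I_#|I|) : i < j -> phi' i :: behead (W' i j) = W' i j.
  by move/neq_lt/paths/andP => [/odd_walkE[p -> _] _].
have ti : toi_immersion G #|I|.
  exists phi', (fun i j => behead (W' i j)); split => // [i j ij | i j k l ij kl ne a b].
    have := paths i j (neq_lt _ _ ij); rewrite -(WE i j ij) odd_path_cons.
    case/and4P=> pW /eqP lW oW uW; split=> // k.
    by rewrite WE //; apply: ends; apply: neq_lt.
  rewrite !WE //; apply/negP => /andP[u1 u2].
  case: (disj _ _ _ _ _ _ (neq_lt _ _ ij) (neq_lt _ _ kl) u1 u2) => -[kE lE].
    by rewrite kE lE eqxx in ne.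
  by move: kl; rewrite kE lE => /(ltn_trans ij); rewrite ltnn.
have le_card : #|I| < #|vtx G|.+1 by rewrite ltnS; apply: leq_card phi_inj.
by rewrite /toi; apply: (leq_bigmax_cond (Ordinal le_card)); apply/pbP.
Qed.

Lemma toi_immersion_toi (G : graph) : toi_immersion G (toi G).
Proof.
rewrite /toi; apply: (big_ind (toi_immersion G)) => [|m n im inn|t /pbP //].
  have f : 'I_0 -> vtx G by case.
  by exists f, (fun _ _ => [::]); split; case.
by case: (leqP m n).
Qed.

Lemma toi_odd_immersion (G : graph) : exists (phi : 'I_(toi G) -> vtx G) W,
  odd_immersion phi W /\ forall i j, W j i = rev (W i j).
Proof.
have [phi [P [phi_inj paths disj]]] := toi_immersion_toi G.
pose V i j := phi i :: P i j.
pose W (i j : 'I_(toi G)) := if i < j then V i j else if j < i then rev (V j i) else [::].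
have W_rev (i j : 'I_(toi G)) : W j i = rev (W i j).
  by rewrite /W; case: (ltngtP i j); rewrite ?revK.
have V_path (i j : 'I_(toi G)) : i < j -> odd_path (adj G) (phi i) (phi j) (V i j).
  by move/paths => [pP /eqP lP uP oP _]; rewrite odd_path_cons pP lP oP uP.
have uses_W_rev (i j : 'I_(toi G)) a b : uses (W j i) a b = uses (W i j) a b.
  by rewrite W_rev uses_rev.
exists phi, W; split => //; split => // [i j ij | i j k ij | i j k l a b ij kl].
- rewrite /W; case: (ltngtP i j) => [/V_path // | /V_path | /val_inj ieq].
    by apply: odd_path_rev; apply: adj_sym.
  by rewrite ieq eqxx in ij.
- rewrite /W; case: (ltngtP i j) => [lt | lt | /val_inj ieq]; rewrite ?mem_rev.
  + by case: (paths i j lt) => _ _ _ _ /(_ k) ends /ends.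
  + by case: (paths j i lt) => _ _ _ _ /(_ k) ends /ends; rewrite orbC.
  + by rewrite ieq eqxx in ij.
wlog lt_ij : i j ij / i < j.
  move=> wlog_ij; case: (ltngtP i j) => [|lt_ji|/val_inj ieq]; first exact: wlog_ij.
    rewrite -uses_W_rev => u1 u2; have ji : j != i by rewrite eq_sym.
    by case: (wlog_ij j i ji lt_ji u1 u2) => ->; [right | left].
  by rewrite ieq eqxx in ij.
wlog lt_kl : k l kl / k < l.
  move=> wlog_kl; case: (ltngtP k l) => [|lt_lk|/val_inj keq]; first exact: wlog_kl.
    move=> u1; rewrite -uses_W_rev => u2; have lk : l != k by rewrite eq_sym.
    by case: (wlog_kl l k lk lt_lk u1 u2) => -[-> ->]; [right | left].
  by rewrite keq eqxx in kl.
rewrite /W lt_ij lt_kl => u1 u2.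
case: (eqVneq (i, j) (k, l)) => [[-> ->] | ne]; first by left.
by move: (disj i j k l lt_ij lt_kl ne a b); rewrite u1 u2.
Qed.

Lemma toi_hom (A B : graph) (f : vtx A -> vtx B) :
  injective f -> {homo f : a b / adj A a b >-> adj B a b} -> toi A <= toi B.
Proof.
move=> f_inj f_homo; have [phi [W [immW _]]] := toi_odd_immersion A.
by rewrite -[toi A]card_ord; apply: odd_immersion_toi (odd_immersion_hom immW f_inj f_homo).
Qed.

Lemma toi_direct (G H : graph) : minn (toi G) (toi H) <= toi (gprod G H Direct).
Proof.
have [phiG [WG [immG _]]] := toi_odd_immersion G.
have [phiH [WH [immH _]]] := toi_odd_immersion H.
have widen_inj n m (le_nm : n <= m) : injective (widen_ord le_nm).
  by move=> i j [] /val_inj.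
have immG' := odd_immersion_relabel immG (widen_inj _ _ (geq_minl (toi G) (toi H))).
have immH' := odd_immersion_relabel immH (widen_inj _ _ (geq_minr (toi G) (toi H))).
by rewrite -[minn _ _]card_ord; apply: odd_immersion_toi (odd_immersion_direct immG' immH').
Qed.

Lemma toi_strong (G H : graph) : toi G * toi H <= toi (gprod G H Strong).
Proof.
have [phiG [WG [immG WG_rev]]] := toi_odd_immersion G.
have [phiH [WH [immH WH_rev]]] := toi_odd_immersion H.
have := odd_immersion_toi (odd_immersion_strong immG immH WG_rev WH_rev).
by rewrite card_prod !card_ord.
Qed.

(** * Bounds on [chi] *)

Lemma chi_coloring (G : graph) :
  exists f : vtx G -> 'I_(chi G), forall u v, adj G u v -> f u != f v.
Proof.
rewrite /chi; case: ex_minnP => k /existsP[f /forallP fP] _; exists f => u v.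
by move: (fP u) => /forallP/(_ v)/implyP.
Qed.

Lemma chi_le_card (G : graph) (C : finType) (f : vtx G -> C) :
  (forall u v, adj G u v -> f u != f v) -> chi G <= #|C|.
Proof.
move=> fP; rewrite /chi; case: ex_minnP => k _; apply; apply/existsP.
exists [ffun v => enum_rank (f v)]; apply/forallP => u; apply/forallP => v; apply/implyP.
by rewrite !ffunE (inj_eq enum_rank_inj); apply: fP.
Qed.

Lemma chi_hom (A B : graph) (f : vtx A -> vtx B) :
  {homo f : a b / adj A a b >-> adj B a b} -> chi A <= chi B.
Proof.
move=> f_homo; have [c cP] := chi_coloring B.
by rewrite -[chi B]card_ord; apply: (chi_le_card (f := c \o f)) => u v /f_homo/cP.
Qed.

Lemma chi_cart (G H : graph) : chi (gprod G H Cartesian) <= maxn (chi G) (chi H).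
Proof.
have [cG cGP] := chi_coloring G; have [cH cHP] := chi_coloring H.
set m := maxn _ _.
have cG_lt g : cG g < m by rewrite leq_max ltn_ord.
have cH_lt h : cH h < m by rewrite leq_max ltn_ord orbT.
have m_gt0 g : 0 < m := leq_ltn_trans (leq0n _) (cG_lt g).
pose c (x : vtx G * vtx H) := Ordinal (ltn_pmod (cG x.1 + cH x.2) (m_gt0 x.1)).
rewrite -[m]card_ord; apply: (@chi_le_card (gprod G H Cartesian) _ c).
move=> [g h] [g' h'] /orP[] /andP[/eqP /= <-] => [/cHP | /cGP]; apply: contraNneq => -[].
  by move/eqP; rewrite eqn_modDl !modn_small // => /eqP/val_inj.
by move/eqP; rewrite eqn_modDr !modn_small // => /eqP/val_inj.
Qed.

Lemma chi_lex (G H : graph) : chi (gprod G H Lexicographic) <= chi G * chi H.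
Proof.
have [cG cGP] := chi_coloring G; have [cH cHP] := chi_coloring H.
rewrite -[chi G]card_ord -[chi H]card_ord -card_prod.
apply: (@chi_le_card (gprod G H Lexicographic) _ (fun x => (cG x.1, cH x.2))).
move=> [g h] [g' h']; rewrite /= /lex_adj /= xpair_eqE negb_and.
by case/orP => [/cGP -> // | /andP[/eqP <- /cHP ->]]; rewrite orbT.
Qed.

Definition product_bound (p : gproduct) : nat -> nat -> nat :=
  match p with
  | Cartesian => maxn
  | Direct => minn
  | Lexicographic | Strong => muln
  end.

Lemma product_bound_mono p a b a' b' :
  a <= a' -> b <= b' -> product_bound p a b <= product_bound p a' b'.
Proof. by case: p => /= aa' bb'; [lia | lia | apply: leq_mul ..]. Qed.

Lemma strong_lex_homo (G H : graph) :
  {homo id : x y / adj (gprod G H Strong) x y >-> adj (gprod G H Lexicographic) x y}.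
Proof.
move=> [g h] [g' h']; rewrite /= /strong_adj /cart_adj /direct_adj /lex_adj /=.
by case/orP => [/orP[] /andP[/eqP-> ->] | /andP[-> _]]; rewrite ?eqxx ?orbT.
Qed.

Lemma chi_gprod p (G H : graph) : chi (gprod G H p) <= product_bound p (chi G) (chi H).
Proof.
case: p => /=; [exact: chi_cart | | exact: chi_lex | ].
  rewrite leq_min; apply/andP; split.
    by apply: (@chi_hom (gprod G H Direct) G fst) => ? ? /andP[].
  by apply: (@chi_hom (gprod G H Direct) H snd) => ? ? /andP[].
apply: leq_trans _ (chi_lex G H).
exact: (@chi_hom (gprod G H Strong) (gprod G H Lexicographic) id (@strong_lex_homo G H)).
Qed.

Lemma toi_gprod p (G H : graph) (g0 : vtx G) (h0 : vtx H) :
  product_bound p (toi G) (toi H) <= toi (gprod G H p).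
Proof.
case: p => /=; [ | exact: toi_direct | | exact: toi_strong].
  rewrite geq_max; apply/andP; split.
    apply: (@toi_hom G (gprod G H Cartesian) (pair^~ h0)) => [? ? [] // | g g' gg'].
    by rewrite /= /cart_adj /= eqxx gg' orbT.
  apply: (@toi_hom H (gprod G H Cartesian) (pair g0)) => [? ? [] // | h h' hh'].
  by rewrite /= /cart_adj /= eqxx hh'.
apply: leq_trans (toi_strong G H) _.
apply: (@toi_hom (gprod G H Strong) (gprod G H Lexicographic) id).
  exact: inj_id.
exact: strong_lex_homo.
Qed.

Theorem mainTheorem2 (p : gproduct) (G H : graph) :
  1 < #|vtx G| -> 1 < #|vtx H| -> ~ min_counterexample (gprod G H p).
Proof.
move=> G_gt1 H_gt1 [+ minimal]; rewrite /counterexample ltnNge => /negP; apply.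
have card_GH : #|vtx (gprod G H p)| = #|vtx G| * #|vtx H| by rewrite card_prod.
have chiG : chi G <= toi G by apply: minimal; rewrite card_GH; nia.
have chiH : chi H <= toi H by apply: minimal; rewrite card_GH; nia.
have [[g0 _] [h0 _]] : (exists g, g \in vtx G) /\ (exists h, h \in vtx H).
  by split; apply/card_gt0P; apply: ltnW.
apply: leq_trans (chi_gprod p G H) _; apply: leq_trans (toi_gprod p g0 h0).
exact: product_bound_mono.
Qed.
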